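(* Let $\Sigma$ be a $(\mathbf d,\mathbf z)$-cluster pattern with principal coefficients and initial seed $(\mathbf x,\mathbf y,B)$. Equip $\mathbb Z[x_1^{\pm1},\dots,x_n^{\pm1},\mathbf y,\mathbf z]$ with the $\mathbb Z^n$-grading $\deg x_i=\mathbf e_i$, $\deg y_j=-\mathbf b_j:=-\sum_{i=1}^nb_{ij}\mathbf e_i$ (minus the $j$-th column of $B$), $\deg z_{i,s}=0$, where $\mathbf e_i$ are the unit vectors. Then every $X$-function $X^t_i(\mathbf x,\mathbf y,\mathbf z)$ of $\Sigma$ is homogeneous with respect to this grading.
   Context: All matrices are integer and $[a]_+=\max(a,0)$. A semifield $\mathbb{P}$ is an abelian multiplicative group with a commutative, associative operation $\oplus$ over which multiplication distributes; $\mathbb{Z}\mathbb{P}$ its group ring, $\mathbb{Q}\mathbb{P}$ the fraction field of $\mathbb Z\mathbb P$, $\mathcal{F}=\mathbb{Q}\mathbb{P}(w_1,\dots,w_n)$. A seed in $\mathbb{P}$ is $(\mathbf{x},\mathbf{y},B)$ with $B=(b_{ij})$ skew-symmetrizable $n\times n$, $\mathbf{x}\in\mathcal{F}^n$, $\mathbf{y}\in\mathbb{P}^n$. Mutation data: positive integers $\mathbf d$ and $z_{i,s}$ ($1\le s\le d_i-1$) with $z_{i,s}=z_{i,d_i-s}$, $z_{i,0}=z_{i,d_i}=1$. The $(\mathbf d,\mathbf z)$-mutation $\mu_k(\mathbf{x},\mathbf{y},B)=(\mathbf{x}',\mathbf{y}',B')$: $b'_{ij}=-b_{ij}$ if $i=k$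 or $j=k$, else $b'_{ij}=b_{ij}+d_k([-b_{ik}]_+b_{kj}+b_{ik}[b_{kj}]_+)$; $y'_k=y_k^{-1}$, $y'_i=y_i(y_k^{[\varepsilon b_{ki}]_+})^{d_k}(\bigoplus_{s=0}^{d_k}z_{k,s}y_k^{\varepsilon s})^{-b_{ki}}$ ($i\ne k$); $x'_i=x_i$ ($i\ne k$), $x'_k=x_k^{-1}(\prod_jx_j^{[-\varepsilon b_{jk}]_+})^{d_k}\frac{\sum_{s=0}^{d_k}z_{k,s}\hat y_k^{\varepsilon s}}{\bigoplus_{s=0}^{d_k}z_{k,s}y_k^{\varepsilon s}}$, $\hat y_i=y_i\prod_jx_j^{b_{ji}}$, $\varepsilon=\pm1$. $\mathbb T_n$ is the $n$-regular tree with edges labeled $1,\dots,n$, distinct labels at each vertex. A $(\mathbf d,\mathbf z)$-cluster pattern in $\mathbb P$ assigns seeds $(\mathbf x_t,\mathbf y_t,B_t)$, $\mathbf x_t=(x^t_i)$, to vertices, related by $\mu_k$ along edges labeled $k$, with initial seed at a fixed vertex $t_0$. Principal coefficients: with $y_1,\dots,y_n$, $z_{i,s}$ ($z_{i,s}=z_{i,d_i-s}$) formal variables, $\mathrm{Trop}(\mathbf y,\mathbf z)$ is the free abelian group they generate with $\oplus$ the componentwise minimum of exponents; the pattern with principal coefficients is the one in $\mathrm{Trop}(\mathbf y,\mathbf z)$ with initial seed $(\mathbf x,\mathbf y,B)$. Each $x^t_i$ equals a Laurent polynomial $X^t_i(\mathbf x,\mathbf y,\mathbf z)$ (the $X$-function),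 which lies in $\mathbb Z[x_1^{\pm1},\dots,x_n^{\pm1},\mathbf y,\mathbf z]$. *)

From HB Require Import structures.
From mathcomp Require Import all_boot all_order all_algebra.
Set Implicit Arguments. Unset Strict Implicit. Unset Printing Implicit Defensive.
Import Order.TTheory GRing.Theory Num.Theory.
Local Open Scope ring_scope.

(* Polynomial ring Z[v_0, ..., v_{k-1}] as an iterated univariate polynomial ring. *)
Fixpoint mp (k : nat) : idomainType :=
  if k is k'.+1 then ({poly mp k'} : idomainType) else int.

(* The variable v_v in Z[v_0,...,v_{k-1}] (0 if v >= k). *)
Fixpoint mvar (k v : nat) : mp k :=
  match k return mp k with
  | 0 => 0
  | k'.+1 => if v == k' then ('X : {poly mp k'}) else ((mvar k' v)%:P : {poly mp k'})
  end.

Definition FF (k : nat) : fieldType := {fraction (mp k)}.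
Definition fvar (k v : nat) : FF k := FracField.tofrac (mvar k v).

Definition pp (a : int) : int := Order.max a 0.

Section Cluster.
Variables (n : nat) (d : 'I_n -> nat) (B0 : 'M[int]_n).

(* Variable numbering: x_j |-> j, y_j |-> n + j, and the formal variable
   z_{i,r} = z_{i,d_i - r} (1 <= r <= d_i/2) |-> 2n + zoff i + (r-1). *)
Definition zoff (i : 'I_n) : nat := (\sum_(j < n | (j < i)%N) (d j)./2)%N.
Definition Nvars : nat := (2 * n + \sum_(j < n) (d j)./2)%N.
Definition yidx (j : 'I_n) : nat := (n + j)%N.
Definition zidx (i : 'I_n) (r : nat) : nat := (2 * n + zoff i + r.-1)%N.

Definition Fld : fieldType := FF Nvars.
Definition var (v : nat) : Fld := fvar Nvars v.

(* The tropical semifield Trop(y, z): Laurent monomials in the y and z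
   variables, encoded by exponent functions (only indices n <= v < Nvars matter). *)
Definition trop := nat -> int.
Definition tone : trop := fun _ => 0.
Definition tmul (a b : trop) : trop := fun v => a v + b v.
Definition tinv (a : trop) : trop := fun v => - a v.
Definition tpow (a : trop) (m : int) : trop := fun v => a v * m.
Definition tadd (a b : trop) : trop := fun v => Order.min (a v) (b v).
Definition tvar (v : nat) : trop := fun u => if u == v then 1 else 0.

Definition temb (e : trop) : Fld :=
  \prod_(v < Nvars | (n <= v)%N) var v ^ (e v).

Definition tz (k : 'I_n) (s : nat) : trop :=
  if (s == 0)%N || (s == d k) then tone else tvar (zidx k (minn s (d k - s))).
Definition fz (k : 'I_n) (s : nat) : Fld :=
  if (s == 0)%N || (s == d k) then 1 else var (zidx k (minn s (d k - s))).

Definition tsum (k : 'I_n) (y : trop) : trop :=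
  foldr (fun s acc => tadd (tmul (tz k s) (tpow y s%:Z)) acc)
        (tmul (tz k 0) (tpow y 0)) (iota 1 (d k)).

Record seed := Seed { sx : 'I_n -> Fld; sy : 'I_n -> trop; sB : 'M[int]_n }.

(* (d, z)-mutation mu_k with eps = +1 *)
Definition mutB (k : 'I_n) (B : 'M[int]_n) : 'M[int]_n :=
  \matrix_(i, j) if (i == k) || (j == k) then - B i j
    else B i j + (d k)%:Z * (pp (- B i k) * B k j + B i k * pp (B k j)).

Definition muty (k : 'I_n) (B : 'M[int]_n) (y : 'I_n -> trop) : 'I_n -> trop :=
  fun i => if i == k then tinv (y k)
    else tmul (tmul (y i) (tpow (tpow (y k) (pp (B k i))) (d k)%:Z))
              (tpow (tsum k (y k)) (- B k i)).

Definition yhat (B : 'M[int]_n) (x : 'I_n -> Fld) (y : 'I_n -> trop) (i : 'I_n) : Fld :=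
  temb (y i) * \prod_(j < n) x j ^ (B j i).

Definition mutx (k : 'I_n) (B : 'M[int]_n) (x : 'I_n -> Fld) (y : 'I_n -> trop)
  : 'I_n -> Fld :=
  fun i => if i == k then
      (x k)^-1 * (\prod_(j < n) x j ^ pp (- B j k)) ^+ d k
      * (\sum_(s < (d k).+1) fz k s * yhat B x y k ^+ s)
      / temb (tsum k (y k))
    else x i.

Definition mutate (k : 'I_n) (S : seed) : seed :=
  Seed (mutx k (sB S) (sx S) (sy S)) (muty k (sB S) (sy S)) (mutB k (sB S)).

Definition init_seed : seed :=
  Seed (fun i => var i) (fun i => tvar (yidx i)) B0.

(* Vertices of T_n = reduced words of edge labels read from t0. *)
Definition reduced (w : seq 'I_n) : bool := sorted (fun a b : 'I_n => a != b) w.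
Definition seed_at (w : seq 'I_n) : seed := foldl (fun S k => mutate k S) init_seed w.

(* Elements of Z[x^{±1}, y, z]: finite Z-linear combinations of monomials
   x^a * (y,z)^b, a : Z^n, b : exponents (>= 0) of variables n <= v < Nvars. *)
Definition mono := (('I_n -> int) * (nat -> nat))%type.
Definition monv (m : mono) : Fld :=
  (\prod_(j < n) var j ^ (m.1 j)) * \prod_(v < Nvars | (n <= v)%N) var v ^+ (m.2 v).
Definition lpoly (L : seq (int * mono)) : Fld := \sum_(t <- L) t.1%:~R * monv t.2.

Definition mdeg (m : mono) : 'I_n -> int :=
  fun i => m.1 i - \sum_(j < n) B0 i j * (m.2 (yidx j))%:Z.

Definition homogeneous (L : seq (int * mono)) : Prop :=
  exists (g : 'I_n -> int) (L' : seq (int * mono)),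
    all (fun t => [forall i, mdeg t.2 i == g i]) L' /\ lpoly L' = lpoly L.

End Cluster.

Definition skew_symmetrizable (n : nat) (B : 'M[int]_n) : Prop :=
  exists D : 'I_n -> nat, (forall i, (0 < D i)%N) /\
    forall i j, (D i)%:Z * B i j = - ((D j)%:Z * B j i).

(* Fix a coordinate r and an integer m > 0, and let sigma be the field endomorphism of
   Q(x, y, z) multiplying every variable by m raised to the r-th coordinate of its
   degree.  Every cluster variable X is an eigenvector, sigma X = m ^ G * X, with G
   independent of m: choose degrees g of the cluster variables making every hat y_j
   of degree 0; then both sides of the exchange relation are products of
   eigenvectors (the sum over s because hat y_k is one), and the mutated seed admits
   such a grading again.  Skew-symmetrizability is carried along only to guarantee
   b_kk = 0.  Conversely, if X = sum of c_t * t over monomials t, the identity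
   sigma X = m ^ G * X holds for infinitely many m, so after clearing denominators
   it is a polynomial identity in m, and comparing coefficients shows that the
   monomials of r-degree G alone already sum to X. *)

From HB Require Import structures.
From mathcomp Require Import all_boot all_order all_algebra.
From mathcomp Require Import ring zify.
Set Implicit Arguments. Unset Strict Implicit. Unset Printing Implicit Defensive.
Import Order.TTheory GRing.Theory Num.Theory.
Local Open Scope ring_scope.

Section FracLift.
Variables (R : idomainType) (T : fieldType) (f : {rmorphism R -> T}).
Hypothesis f_inj : injective f.
Local Notation "x %:F" := (@FracField.tofrac R x).

Lemma frac_numden (x : {fraction R}) : x = (\n_(repr x))%:F / (\d_(repr x))%:F.
Proof.
have d0 : (\d_(repr x))%:F != 0 by rewrite tofrac_eq0 denom_ratioP.
apply: (mulIf d0); rewrite mulrVK ?unitfE // -{1}[x]reprK.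
unlock FracField.tofrac; rewrite !piE; apply/eqmodP => /=.
rewrite FracField.equivfE /= !numden_Ratio ?oner_eq0 ?mulf_neq0 ?denom_ratioP //.
all: by rewrite ?mulr1 ?oner_eq0 // mulrC.
Qed.

Lemma frac_div_ex (x : {fraction R}) : exists a b, b != 0 /\ x = a%:F / b%:F.
Proof. by exists \n_(repr x), \d_(repr x); split; [exact: denom_ratioP | exact: frac_numden]. Qed.

(* [h] is unused in the body: it makes the morphism instances below depend on it. *)
Definition frac_lift (h : injective f) (x : {fraction R}) : T :=
  f \n_(repr x) / f \d_(repr x).
Local Notation lift := (frac_lift f_inj).

Lemma frac_lift_div a b : b != 0 -> lift (a%:F / b%:F) = f a / f b.
Proof.
move=> b0; rewrite /lift; set x := a%:F / b%:F.
have d0 := denom_ratioP (repr x).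
have fnz c : c != 0 -> f c != 0 by move=> c0; rewrite raddf_eq0.
apply/eqP; rewrite eqr_div ?fnz // -!rmorphM (inj_eq f_inj) -tofrac_eq !tofracM.
by rewrite -eqr_div ?tofrac_eq0 // -frac_numden.
Qed.

Lemma frac_lift_tofrac a : lift a%:F = f a.
Proof. by have := frac_lift_div a (oner_neq0 _); rewrite !rmorph1 !divr1. Qed.

Lemma frac_lift_is_zmod_morphism : zmod_morphism lift.
Proof.
move=> x y; have [a [b [b0 ->]]] := frac_div_ex x; have [c [e [e0 ->]]] := frac_div_ex y.
have fnz c' : c' != 0 -> f c' != 0 by move=> c0; rewrite raddf_eq0.
rewrite -mulNr -tofracN addf_div ?tofrac_eq0 // -!tofracM -tofracD.
rewrite !frac_lift_div ?mulf_neq0 // -mulNr -rmorphN.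
by rewrite addf_div ?fnz // !rmorphD !rmorphM.
Qed.

Lemma frac_lift_is_monoid_morphism : monoid_morphism lift.
Proof.
split; first by rewrite -tofrac1 frac_lift_tofrac rmorph1.
move=> x y; have [a [b [b0 ->]]] := frac_div_ex x; have [c [e [e0 ->]]] := frac_div_ex y.
by rewrite mulf_div -!tofracM !frac_lift_div ?mulf_neq0 // mulf_div !rmorphM.
Qed.

HB.instance Definition _ :=
  GRing.isZmodMorphism.Build _ _ lift frac_lift_is_zmod_morphism.
HB.instance Definition _ :=
  GRing.isMonoidMorphism.Build _ _ lift frac_lift_is_monoid_morphism.
End FracLift.

Lemma frac_char0 (R : idomainType) : has_char0 R -> has_char0 {fraction R}.
Proof.
move/pcharf0P=> R0; apply/pcharf0P => m.
by rewrite -(rmorph_nat (@FracField.tofrac R)) tofrac_eq0 R0.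
Qed.

Lemma mp_char0 k : has_char0 (mp k).
Proof.
apply/pcharf0P; elim: k => [|k IH] m /=; first by rewrite pnatr_eq0.
by rewrite -polyC_natr polyC_eq0 IH.
Qed.

Lemma FF_char0 k : has_char0 (FF k).
Proof. exact/frac_char0/mp_char0. Qed.

Lemma FF_natr_neq0 K m : (0 < m)%N -> (m%:R : FF K) != 0.
Proof. by move=> m_gt0; rewrite ((pcharf0P _).1 (FF_char0 K)); exact: lt0n_neq0. Qed.

Lemma mvar_ge k v : (k <= v)%N -> mvar k v = 0.
Proof. by elim: k => [//|k IH] kv /=; rewrite (gtn_eqF kv) IH ?rmorph0 // ltnW. Qed.

Fixpoint mp_eval (T : comNzRingType) (s : nat -> T) (k : nat) : {rmorphism mp k -> T} :=
  match k return {rmorphism mp k -> T} with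
  | 0 => (intr : {rmorphism int -> T})
  | k'.+1 => horner_morph (fun p => mulrC (s k') (mp_eval s k' p))
  end.

Lemma mp_eval_var (T : comNzRingType) (s : nat -> T) k v :
  mp_eval s k (mvar k v) = if (v < k)%N then s v else 0.
Proof.
elim: k => [|k IH] /=; first by rewrite rmorph0.
case: eqP => [->|vk]; first by rewrite horner_morphX ltnSn.
by rewrite horner_morphC IH ltnS [(v <= k)%N]leq_eqVlt (introF eqP vk).
Qed.

Lemma mp_morph_eq (T : nzRingType) k (f g : {rmorphism mp k -> T}) :
  (forall v, (v < k)%N -> f (mvar k v) = g (mvar k v)) -> f =1 g.
Proof.
elim: k f g => [|k IH] f g fg p /=.
  by move: p f g {fg} => /= p f g; rewrite -[p]intz !rmorph_int.
have fgC (q : mp k) : f q%:P = g q%:P.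
  apply: (IH (f \o polyC) (g \o polyC)) => v vk /=.
  by have := fg v (ltnW vk); rewrite /= (ltn_eqF vk).
have fgX : f 'X = g 'X by have := fg k (ltnSn k); rewrite /= eqxx.
rewrite -[p]coefK poly_def !rmorph_sum; apply: eq_bigr => i _.
by rewrite -mul_polyC !rmorphM !rmorphXn /= fgC fgX.
Qed.

Fixpoint mp_scale (c : nat -> nat) (k : nat) : {rmorphism mp k -> mp k} :=
  match k return {rmorphism mp k -> mp k} with
  | 0 => idfun
  | k'.+1 => horner_morph (fun p => mulrC ((c k')%:R%:P * 'X)
                                          ((polyC \o mp_scale c k') p))
  end.

Lemma mp_scale_var c k v : (v < k)%N -> mp_scale c k (mvar k v) = (c v)%:R * mvar k v.
Proof.
elim: k => [//|k IH] vk /=; case: eqP => [->|vk'].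
  by rewrite horner_morphX polyC_natr.
have {}vk : (v < k)%N by move: vk; rewrite ltnS leq_eqVlt (introF eqP vk').
by rewrite horner_morphC /= IH // polyCM polyC_natr.
Qed.

Lemma coef_mp_scale c k (p : mp k.+1) j :
  (mp_scale c k.+1 p)`_j = mp_scale c k p`_j * (c k)%:R ^+ j.
Proof.
rewrite /= /horner_morph (horner_coef_wide _ (size_poly _ _)).
rewrite (eq_bigr (fun i : 'I_(size p) => (mp_scale c k p`_i * (c k)%:R ^+ i) *: 'X^i)).
  rewrite coef_sumMXn (eq_bigl (fun i : 'I_(size p) => i == j :> nat)) //.
  rewrite (big_ord1_eq _ (fun i => mp_scale c k p`_i * (c k)%:R ^+ i)).
  case: ltnP => // pj.
  by rewrite nth_default // rmorph0 mul0r.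
by move=> i _; rewrite coef_map /= exprMn -polyC_exp -!mul_polyC mulrA -polyCM.
Qed.

Lemma mp_scale_inj c k : (forall v, 0 < c v)%N -> injective (mp_scale c k).
Proof.
move=> c_gt0; elim: k => [|k IH] /=; first by move=> x y.
apply: raddf_inj => p p0; apply/polyP => j; rewrite coef0.
have /eqP := congr1 (fun q : {poly mp k} => q`_j) p0.
rewrite /= coef_mp_scale coef0 mulf_eq0 expf_eq0 ((pcharf0P _).1 (mp_char0 k)).
have -> : (c k == 0%N) = false by rewrite eqn0Ngt c_gt0.
by rewrite andbF orbF raddf_eq0 // => /eqP.
Qed.

Lemma scaling_morphism K (w : nat -> int) (m : nat) : (0 < m)%N ->
  exists sigma : {rmorphism FF K -> FF K},
    forall v, sigma (fvar K v) = m%:R ^ w v * fvar K v.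
Proof.
move=> m_gt0; set c : FF K := m%:R.
have c0 : c != 0 by exact: FF_natr_neq0.
(* [S] rescales the variables of the polynomial ring into the fraction field; it is
   injective because, followed by the lift [E] of the uniform rescaling by [m ^ A],
   it becomes the rescaling by the nonnegative powers [m ^ (w + A)], an injective
   endomorphism of the polynomial ring. *)
set A : nat := (\sum_(v < K) `|w v|)%N.
have wA v : (v < K)%N -> 0 <= w v + A%:Z.
  move=> vK; have : (`|w v| <= A)%N by rewrite /A (bigD1 (Ordinal vK)) //= leq_addr.
  lia.
set S := mp_eval (fun v => c ^ w v * fvar K v) K.
have HA_inj : injective (@FracField.tofrac (mp K) \o mp_scale (fun=> m ^ A)%N K).
  move=> p q /= /eqP; rewrite tofrac_eq => /eqP.
  by apply: mp_scale_inj => v; rewrite expn_gt0 m_gt0.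
set E := frac_lift HA_inj.
set Ea := mp_scale (fun v => m ^ absz (w v + A%:Z)%R)%N K.
have Ea_inj : injective Ea by apply: mp_scale_inj => v; rewrite expn_gt0 m_gt0.
have ES : E \o S =1 @FracField.tofrac (mp K) \o Ea.
  apply: mp_morph_eq => v vK /=.
  rewrite /S mp_eval_var vK rmorphM /= fmorphXz rmorph_nat /fvar frac_lift_tofrac /=.
  rewrite /Ea !mp_scale_var // !rmorphM !rmorph_nat mulrA; congr (_ * _).
  by rewrite !natrX !exprnP -expfzDr // gez0_abs ?wA.
have S_inj : injective S.
  apply: raddf_inj => p Sp0; have := ES p; rewrite /= Sp0 /E rmorph0 => /esym/eqP.
  by rewrite tofrac_eq0 raddf_eq0 // => /eqP.
exists (frac_lift S_inj) => v /=.
rewrite {1}/fvar frac_lift_tofrac /S mp_eval_var; case: ltnP => // Kv.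
by rewrite /fvar mvar_ge // rmorph0 mulr0.
Qed.

Section Eigen.
Variables (F : fieldType) (sigma : {rmorphism F -> F}) (c : F).
Hypothesis c0 : c != 0.

Definition eigen (u : F) (a : int) := sigma u = c ^ a * u.

Lemma eigen1 : eigen 1 0.
Proof. by rewrite /eigen rmorph1 expr0z mulr1. Qed.

Lemma eigen0 a : eigen 0 a.
Proof. by rewrite /eigen rmorph0 mulr0. Qed.

Lemma eigenM u v a b : eigen u a -> eigen v b -> eigen (u * v) (a + b).
Proof. by rewrite /eigen rmorphM => -> ->; rewrite expfzDr // mulrACA. Qed.

Lemma eigenV u a : eigen u a -> eigen u^-1 (- a).
Proof. by rewrite /eigen fmorphV => ->; rewrite invfM -invr_expz mulrC. Qed.

Lemma eigenXz u a z : eigen u a -> eigen (u ^ z) (a * z).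
Proof. by rewrite /eigen fmorphXz => ->; rewrite expfzMl exprz_exp. Qed.

Lemma eigenXn u a (N : nat) : eigen u a -> eigen (u ^+ N) (a * N%:Z).
Proof. by rewrite exprnP; apply: eigenXz. Qed.

Lemma eigen_prod (I : Type) (s : seq I) (P : pred I) (u : I -> F) (a : I -> int) :
  (forall i, P i -> eigen (u i) (a i)) ->
  eigen (\prod_(i <- s | P i) u i) (\sum_(i <- s | P i) a i).
Proof.
move=> ua; apply: (big_rec2 (fun b v => eigen v b)); first exact: eigen1.
by move=> i b v /ua; apply: eigenM.
Qed.

Lemma eigen_sum (I : Type) (s : seq I) (P : pred I) (u : I -> F) a :
  (forall i, P i -> eigen (u i) a) -> eigen (\sum_(i <- s | P i) u i) a.
Proof.
move=> ua; apply: (big_rec (fun v => eigen v a)); first exact: eigen0.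
by move=> i v /ua; rewrite /eigen rmorphD mulrDr => -> ->.
Qed.

End Eigen.

Lemma pp_spec (a : int) : (0 <= a /\ pp a = a) \/ (a <= 0 /\ pp a = 0).
Proof. rewrite /pp; lia. Qed.

Lemma skew_mutation_term (Di Dj Dk : nat) (a b c e : int) :
  (0 < Di)%N -> (0 < Dj)%N -> (0 < Dk)%N ->
  Di%:Z * a = - (Dk%:Z * c) -> Dk%:Z * b = - (Dj%:Z * e) ->
  Di%:Z * (pp (- a) * b + a * pp b) = - (Dj%:Z * (pp (- e) * c + e * pp c)).
Proof.
move=> Di0 Dj0 Dk0 ac be.
have [[? ->]|[? ->]] := pp_spec (- a); have [[? ->]|[? ->]] := pp_spec b;
have [[? ->]|[? ->]] := pp_spec (- e); have [[? ->]|[? ->]] := pp_spec c; nia.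
Qed.

Lemma skew_symmetrizable_diag n (B : 'M[int]_n) i : skew_symmetrizable B -> B i i = 0.
Proof. by case=> D [D_gt0 DB]; have := DB i i; have := D_gt0 i; lia. Qed.

Lemma skew_symmetrizable_mutB n (d : 'I_n -> nat) k (B : 'M[int]_n) :
  skew_symmetrizable B -> skew_symmetrizable (mutB d k B).
Proof.
case=> D [D_gt0 DB]; exists D; split=> // i j; rewrite !mxE.
have [->|ik] := eqVneq i k; first by rewrite orbT !mulrN DB opprK.
have [->|jk] := eqVneq j k; first by rewrite !mulrN DB opprK.
rewrite /= mulrDr [in RHS]mulrDr DB opprD; congr (_ + _).
rewrite mulrCA (skew_mutation_term (D_gt0 i) (D_gt0 j) (D_gt0 k) (DB i k) (DB k j)).
by rewrite [in RHS]mulrCA mulrN.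
Qed.

Section Degree.
Variables (n : nat) (d : 'I_n -> nat) (B0 : 'M[int]_n) (r : 'I_n).

(* [var_deg v] is the [r]-th coordinate of the degree of [var d v], and [trop_deg e]
   that of the monomial [temb d e]. *)
Definition var_deg (v : nat) : int :=
  (v == r :> nat)%:Z - \sum_(j < n) (v == yidx j)%:Z * B0 r j.
Definition trop_deg (e : trop) : int := - \sum_(j < n) B0 r j * e (yidx j).

Lemma trop_degM a b : trop_deg (tmul a b) = trop_deg a + trop_deg b.
Proof. by rewrite /trop_deg (eq_bigr _ (fun j _ => mulrDr _ _ _)) big_split opprD. Qed.

Lemma trop_degX a z : trop_deg (tpow a z) = trop_deg a * z.
Proof. by rewrite /trop_deg (eq_bigr _ (fun j _ => mulrA _ _ _)) -mulr_suml mulNr. Qed.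

Lemma trop_degV a : trop_deg (tinv a) = - trop_deg a.
Proof. by rewrite /trop_deg (eq_bigr _ (fun j _ => mulrN _ _)) sumrN. Qed.

Lemma trop_deg_tvar (j : 'I_n) : trop_deg (tvar (yidx j)) = - B0 r j.
Proof.
rewrite /trop_deg (bigD1 j) //= /tvar eqxx mulr1 big1 ?addr0 // => l lj.
by rewrite eqn_add2l (inj_eq val_inj) (negbTE lj) mulr0.
Qed.

Lemma yidx_lt (j : 'I_n) : (yidx j < Nvars d)%N.
Proof. by rewrite /yidx /Nvars mul2n -addnn -addnA ltn_add2l ltn_addr. Qed.

Lemma var_deg_x (j : 'I_n) : var_deg j = (j == r)%:Z.
Proof.
rewrite /var_deg big1 ?subr0 // => l _.
by rewrite ltn_eqF ?mul0r // /yidx ltn_addr.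
Qed.

Lemma var_deg_z v : (2 * n <= v)%N -> var_deg v = 0.
Proof.
move=> nv; have rv : (r < v)%N by rewrite (leq_trans (ltn_ord r)) // (leq_trans _ nv) ?leq_pmull.
rewrite /var_deg (gtn_eqF rv) big1 ?subr0 // => j _.
have jv : (yidx j < v)%N by apply: leq_trans nv; rewrite /yidx mul2n -addnn ltn_add2l.
by rewrite gtn_eqF ?mul0r.
Qed.

Lemma sum_yidx (X : nat -> int) (j : 'I_n) :
  \sum_(v < Nvars d | (n <= v)%N) (v == yidx j :> nat)%:Z * X v = X (yidx j).
Proof.
rewrite (bigD1 (Ordinal (yidx_lt j))) ?leq_addr //= eqxx mul1r big1 ?addr0 //.
move=> v /andP[_ vj]; rewrite (_ : (v == yidx j :> nat) = false) ?mul0r //.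
by apply: contraNF vj => /eqP vj; apply/eqP/val_inj.
Qed.

Lemma sum_var_deg (e : trop) :
  \sum_(v < Nvars d | (n <= v)%N) var_deg v * e v = trop_deg e.
Proof.
rewrite /trop_deg -sumrN (eq_bigr (fun v : 'I_(Nvars d) =>
  \sum_(j < n) - ((v == yidx j :> nat)%:Z * (B0 r j * e v)))) => [|v nv].
  rewrite exchange_big; apply: eq_bigr => j _ /=.
  by rewrite sumrN (sum_yidx (fun v => B0 r j * e v)).
rewrite /var_deg gtn_eqF ?(leq_trans (ltn_ord r)) // sub0r mulNr mulr_suml -sumrN.
by apply: eq_bigr => j _; rewrite mulrA.
Qed.

Definition yhat_deg0 (B : 'M[int]_n) (y : 'I_n -> trop) (g : 'I_n -> int) :=
  forall j, trop_deg (y j) + \sum_l g l * B l j = 0.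

Definition mut_grading (k : 'I_n) (B : 'M[int]_n) (y : 'I_n -> trop) (g : 'I_n -> int) :
    'I_n -> int := fun j =>
  if j == k then - g k + (\sum_l g l * pp (- B l k)) * (d k)%:Z - trop_deg (tsum d k (y k))
  else g j.

Lemma yhat_deg0_mutate k (B : 'M[int]_n) y g : B k k = 0 -> yhat_deg0 B y g ->
  yhat_deg0 (mutB d k B) (muty d k B y) (mut_grading k B y g).
Proof.
move=> Bkk yg j; have ygk := yg k.
have [->|jk] := eqVneq j k.
  rewrite /muty eqxx trop_degV (eq_bigr (fun l => - (g l * B l k))) => [|l _].
    by rewrite sumrN -opprD ygk oppr0.
  rewrite mxE eqxx orbT /mut_grading mulrN; case: eqP => [->|//].
  by rewrite Bkk !mulr0.
have ygj := yg j; rewrite (bigD1 k) //= in ygj; rewrite (bigD1 k) //= in ygk.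
rewrite /muty (negbTE jk) !trop_degM !trop_degX (bigD1 k) //= /mut_grading /mutB.
rewrite eqxx !mxE eqxx /= [\sum_(l | l != k) _](eq_bigr (fun l => g l * B l j
    + (d k)%:Z * B k j * (g l * pp (- B l k)) + (d k)%:Z * pp (B k j) * (g l * B l k)));
  last by move=> l lk; rewrite (negbTE lk) mxE (negbTE lk) (negbTE jk) /=; ring.
rewrite !big_split -!mulr_sumr /= [\sum_l _](bigD1 k) //= Bkk oppr0 /pp maxxx mulr0 add0r.
set R1 := \sum_(l | l != k) g l * B l j in ygj *.
set R2 := \sum_(l | l != k) g l * B l k in ygk *.
have -> : trop_deg (y j) = - (g k * B k j + R1) by lia.
have -> : trop_deg (y k) = - R2 by lia.
ring.
Qed.

Definition deg_scaling (m : nat) (sigma : {rmorphism Fld d -> Fld d}) :=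
  forall v, sigma (var d v) = m%:R ^ var_deg v * var d v.

Section Scaling.
Variables (m : nat) (sigma : {rmorphism Fld d -> Fld d}).
Hypotheses (m_gt0 : (0 < m)%N) (sigmaE : deg_scaling m sigma).
Local Notation eig := (eigen sigma m%:R).

Let m0 : (m%:R : Fld d) != 0. Proof. exact: FF_natr_neq0. Qed.

Lemma eigen_temb e : eig (temb d e) (trop_deg e).
Proof. by rewrite -sum_var_deg; apply: (eigen_prod m0) => v _; apply/eigenXz/sigmaE. Qed.

Lemma eigen_fz k s : eig (fz d k s) 0.
Proof.
rewrite /fz; case: ifP => _; first exact: eigen1.
by rewrite /eigen sigmaE var_deg_z // /zidx -addnA leq_addr.
Qed.

Lemma eigen_monv (t : mono n) : eig (monv d t) (mdeg B0 t r).
Proof.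
have -> : mdeg B0 t r = \sum_(j < n) var_deg j * t.1 j
    + \sum_(v < Nvars d | (n <= v)%N) var_deg v * (t.2 v)%:Z.
  rewrite (sum_var_deg (fun v => (t.2 v)%:Z)) (bigD1 r) //= var_deg_x eqxx mul1r.
  by rewrite big1 ?addr0 // => j jr; rewrite var_deg_x (negbTE jr) mul0r.
apply: (eigenM m0); apply: (eigen_prod m0) => v _; first exact/eigenXz/sigmaE.
exact/eigenXn/sigmaE.
Qed.

Lemma eigen_yhat (B : 'M[int]_n) x y (g : 'I_n -> int) :
  (forall j, eig (x j) (g j)) -> yhat_deg0 B y g -> forall j, eig (yhat B x y j) 0.
Proof.
move=> xg yg j; rewrite -(yg j); apply: (eigenM m0); first exact: eigen_temb.
by apply: (eigen_prod m0) => l _; apply/eigenXz.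
Qed.

Lemma eigen_mutx (k : 'I_n) (B : 'M[int]_n) x y (g : 'I_n -> int) :
  (forall j, eig (x j) (g j)) -> yhat_deg0 B y g ->
  forall j, eig (mutx k B x y j) (mut_grading k B y g j).
Proof.
move=> xg yg j; rewrite /mutx /mut_grading; case: eqP => _; last exact: xg.
have sum0 : eig (\sum_(s < (d k).+1) fz d k s * yhat B x y k ^+ s) 0.
  apply: eigen_sum => s _.
  by have := eigenM m0 (eigen_fz k s) (eigenXn s (eigen_yhat xg yg k)); rewrite mul0r addr0.
suff : eig ((x k)^-1 * (\prod_(l < n) x l ^ pp (- B l k)) ^+ d k
    * (\sum_(s < (d k).+1) fz d k s * yhat B x y k ^+ s) / temb d (tsum d k (y k)))
  (- g k + (\sum_l g l * pp (- B l k)) * (d k)%:Z + 0 - trop_deg (tsum d k (y k))).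
  by rewrite addr0.
apply: (eigenM m0); last exact/eigenV/eigen_temb.
apply: (eigenM m0) sum0; apply: (eigenM m0); first exact/eigenV/xg.
by apply/eigenXn/(eigen_prod m0) => l _; apply/eigenXz.
Qed.

End Scaling.

Definition graded_seed (S : seed d) : Prop := exists g : 'I_n -> int,
  (forall m sigma, (0 < m)%N -> deg_scaling m sigma ->
     forall j, eigen sigma m%:R (sx S j) (g j))
  /\ yhat_deg0 (sB S) (sy S) g.

Lemma graded_seed_mutate k S : sB S k k = 0 -> graded_seed S -> graded_seed (mutate k S).
Proof.
move=> Bkk [g [xg yg]]; exists (mut_grading k (sB S) (sy S) g); split.
  by move=> m sigma m_gt0 sigmaE; apply: eigen_mutx => //; apply: xg.
exact: yhat_deg0_mutate.
Qed.

Lemma graded_init_seed : graded_seed (init_seed d B0).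
Proof.
exists (fun j => (j == r)%:Z); split => [m sigma m_gt0 sigmaE j|j] /=.
  by rewrite /eigen sigmaE var_deg_x.
rewrite trop_deg_tvar (bigD1 r) //= eqxx mul1r big1 ?addr0 ?addNr // => l lr.
by rewrite (negbTE lr) mul0r.
Qed.

Lemma graded_seed_at w : skew_symmetrizable B0 -> graded_seed (seed_at d B0 w).
Proof.
rewrite /seed_at => skB; have : skew_symmetrizable (sB (init_seed d B0)) by [].
elim: w (init_seed d B0) graded_init_seed => [|k w IH] S //= gS skS.
apply: IH; last exact: skew_symmetrizable_mutB.
exact: graded_seed_mutate (skew_symmetrizable_diag _ skS) gS.
Qed.

End Degree.

Lemma char0_natr_inj (R : idomainType) : has_char0 R -> injective (fun m : nat => m%:R : R).
Proof.
move/pcharf0P=> R0 m k /eqP mk; apply/eqP.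
wlog le_km : m k mk / (k <= m)%N.
  move=> IH; case: (leqP k m) => [|/ltnW] km; first exact: IH.
  by rewrite eq_sym; apply: IH; rewrite // eq_sym.
by rewrite -subr_eq0 -natrB // R0 subn_eq0 in mk; rewrite eqn_leq mk le_km.
Qed.

Lemma poly_natr_roots_eq0 (R : idomainType) (p : {poly R}) : has_char0 R ->
  (forall m : nat, (0 < m)%N -> root p m%:R) -> p = 0.
Proof.
move=> R0 p_roots; apply/eqP/negPn/negP => p0.
suff : (size p < size p)%N by rewrite ltnn.
rewrite -[X in (X < _)%N](size_iota 0) -(size_map (fun i => i.+1%:R : R)).
apply: max_poly_roots p0 _ _; first by apply/allP => _ /mapP[i _ ->]; apply: p_roots.
by rewrite map_inj_uniq ?iota_uniq // => i j /(char0_natr_inj R0) [].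
Qed.

Lemma scaled_sum_component (F : fieldType) (I : finType) (P : pred I) (u : I -> F)
    (a : I -> int) (G : int) (X : F) : has_char0 F ->
  (forall m : nat, (0 < m)%N -> \sum_(i | P i) m%:R ^ a i * u i = m%:R ^ G * X) ->
  \sum_(i | P i && (a i == G)) u i = X.
Proof.
move=> F0 scaled.
set N : nat := (\max_i `|a i| + `|G|)%N.
have aN i : 0 <= a i + N%:Z by have := @leq_bigmax _ (fun i => `|a i|%N) i; lia.
have GN : 0 <= G + N%:Z by lia.
set q : {poly F} := \sum_(i | P i) u i *: 'X^(absz (a i + N%:Z)) - X *: 'X^(absz (G + N%:Z)).
have q0 : q = 0.
  apply: (@poly_natr_roots_eq0 _ _ F0) => m m_gt0; apply/rootP.
  have m0 : m%:R != 0 :> F by rewrite ((pcharf0P _).1 F0); exact: lt0n_neq0.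
  rewrite /q hornerD hornerN hornerZ hornerXn horner_sum.
  rewrite (eq_bigr (fun i => m%:R ^+ N * (m%:R ^ a i * u i))) => [|i _]; last first.
    by rewrite hornerZ hornerXn [m%:R ^+ _]exprnP gez0_abs ?aN // expfzDr // -exprnP; ring.
  by rewrite -big_distrr /= scaled // [m%:R ^+ `|_|]exprnP gez0_abs // expfzDr // -exprnP; ring.
have := congr1 (fun p : {poly F} => p`_(absz (G + N%:Z))) q0.
rewrite coefB coefZ coefXn eqxx mulr1 coef0 coef_sumMXn => /subr0_eq <-.
apply: eq_bigl => i; congr (_ && _); apply/eqP/eqP => [-> //|].
by have := aN i; lia.
Qed.

Lemma homogeneous_part n (d : 'I_n -> nat) (B0 : 'M[int]_n) (L : seq (int * mono n))
    (X : Fld d) (G : 'I_n -> int) :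
  (forall r m sigma, (0 < m)%N -> deg_scaling B0 r m sigma -> eigen sigma m%:R X (G r)) ->
  lpoly d L = X ->
  lpoly d [seq t <- L | [forall r, mdeg B0 t.2 r == G r]] = X.
Proof.
move=> XG LX; pose t0 : int * mono n := (0, (fun=> 0, fun=> 0%N)).
pose u (j : 'I_(size L)) := (nth t0 L j).1%:~R * monv d (nth t0 L j).2.
pose deg (j : 'I_(size L)) := mdeg B0 (nth t0 L j).2.
have lpolyE Q : lpoly d [seq t <- L | Q t] = \sum_(j < size L | Q (nth t0 L j)) u j.
  by rewrite /lpoly big_filter (big_nth t0) big_mkord.
have part (rs : seq 'I_n) : \sum_(j | all (fun r => deg j r == G r) rs) u j = X.
  elim: rs => [|r rs IH] /=; first by rewrite -LX -[L in lpoly d L]filter_predT lpolyE.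
  rewrite (eq_bigl (fun j => all (fun r => deg j r == G r) rs && (deg j r == G r))) => [|j];
    last by rewrite andbC.
  apply: (scaled_sum_component (a := fun j => deg j r) (FF_char0 _)) => m m_gt0.
  have [sigma sigmaE] := scaling_morphism (Nvars d) (var_deg B0 r) m_gt0.
  rewrite -(XG r m sigma m_gt0 sigmaE) -{1}IH rmorph_sum; apply: eq_bigr => j _.
  by rewrite rmorphM /= rmorph_int (eigen_monv m_gt0 sigmaE) mulrCA.
rewrite lpolyE -(part (enum 'I_n)); apply: eq_bigl => j.
by apply/forallP/allP => [h r _|h r]; [exact: h | exact/h/mem_enum].
Qed.

Theorem mainTheorem10 (n : nat) (d : 'I_n -> nat) (B : 'M[int]_n)
  (hd : forall i, (0 < d i)%N) (hB : skew_symmetrizable B)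
  (w : seq 'I_n) (hw : reduced w) (i : 'I_n)
  (L : seq (int * mono n))
  (hL : lpoly d L = sx (seed_at d B w) i) :
  homogeneous d B L.
Proof.
have /fin_all_exists[G XG] : forall r, exists G : int, forall m sigma, (0 < m)%N ->
    deg_scaling B r m sigma -> eigen sigma m%:R (sx (seed_at d B w) i) G.
  move=> r; have [g [xg _]] := graded_seed_at d r w hB.
  by exists (g i) => m sigma m_gt0 sigmaE; apply: xg.
exists G, [seq t <- L | [forall r, mdeg B t.2 r == G r]]; split; first exact: filter_all.
by rewrite hL; apply: homogeneous_part.
Qed.
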